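(* Let $\mathcal{I}$ be an instance of SNSAT with $|\mathcal{I}|=n$, and let $\mathcal{K}_\mathcal{I}$ and $\psi_0,\dots,\psi_{n+1}$ be the Kripke structure and formulas associated with $\mathcal{I}$ as described in the context. Then for all $0\le k\le n+1$ and all $r\in\{1,\dots,n\}$: (1) if $k\ge r$, then $v_\mathcal{I}(x_r)=\top$ iff $\mathcal{K}_\mathcal{I},w_{x_r}\models\psi_k$ (where $w_{x_r}$ denotes the track of length one consisting of that state); (2) if $k\ge r+1$, then $v_\mathcal{I}(x_r)=\bot$ iff $\mathcal{K}_\mathcal{I},\overline{w_{x_r}}\models\psi_k$.
   Context: SNSAT: an instance $\mathcal{I}$ consists of Boolean variables $X=\{x_1,\dots,x_n\}$ and propositional formulas $F_1(Z_1),F_2(x_1,Z_2),\dots,F_n(x_1,\dots,x_{n-1},Z_n)$, where $F_i$ uses variables among $x_1,\dots,x_{i-1}$ and $Z_i=\{z_i^1,\dots,z_i^{j_i}\}$, the sets $Z_i$ being pairwise disjoint and disjoint from $X$; $|\mathcal{I}|=n$. The valuation $v_\mathcal{I}$ of $X$ is defined by $v_\mathcal{I}(x_i)=\top$ iff $F_i(v_\mathcal{I}(x_1),\dots,v_\mathcal{I}(x_{i-1}),Z_i)$ is satisfiable. Kripke structures, tracks and semantics: a finite Kripke structure $(\mathcal{AP},W,\delta,\mu,w_0)$ has left-total $\delta\subseteq W\times W$ and labelling $\mu:W\to2^{\mathcal{AP}}$; a track is a nonempty finite sequence of states consecutive in $\delta$; $\mathrm{fst},\mathrm{lst}$ are its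 first/last state. Formulas use proposition letters, $\neg,\wedge$ (other connectives as abbreviations), $\top,\bot$, $\langle A\rangle$, $\langle B\rangle$, $[B]\psi=\neg\langle B\rangle\neg\psi$. $\rho\models p$ iff $p\in\mu(w)$ for all states $w$ of $\rho$; $\rho\models\langle A\rangle\psi$ iff some track $\rho'$ with $\mathrm{fst}(\rho')=\mathrm{lst}(\rho)$ satisfies $\psi$; $\rho\models\langle B\rangle\psi$ iff some proper prefix $\rho(1,i)$, $1\le i<|\rho|$, satisfies $\psi$. The $F_i$ are read as formulas over proposition letters $X\cup Z$. Construction: let $Z=\bigcup_iZ_i$, $R=\{r_1,\dots,r_n\}$, $R_i=R\setminus\{r_i\}$. $\mathcal{K}_\mathcal{I}$ has proposition letters $X\cup Z\cup\{s,t\}\cup R\cup\{p_{\overline{x_i}}:1\le i\le n\}$ and distinct states $s_0$ and, for each $i$, $w_{x_i},\overline{w_{x_i}},\overline{s_i}$, and $w_{z_i^u},\overline{w_{z_i^u}}$ for $1\le u\le j_i$. Labels: $\mu(w_{x_i})=X\cup Z\cup\{s,t\}\cup R_i$; $\mu(\overline{w_{x_i}})=(X\setminus\{x_i\})\cup Z\cup\{s,t\}\cup R_i\cup\{p_{\overline{x_i}}\}$; $\mu(w_{z_i^u})=X\cup Z\cup\{s,t\}\cup R_i$; $\mu(\overline{w_{z_i^u}})=X\cup(Z\setminus\{z_i^u\})\cup\{s,t\}\cup R_i$; $\mu(\overline{s_i})=X\cup Z\cup\{t\}\cup R_i$; $\mu(s_0)=X\cup Z\cup\{s\}\cup R$.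 Call $L_i^0=\{w_{x_i},\overline{w_{x_i}}\}$ and $L_i^u=\{w_{z_i^u},\overline{w_{z_i^u}}\}$ for $1\le u\le j_i$. Transitions: $\overline{w_{x_i}}\to\overline{s_i}\to w_{x_i}$; every state of $L_i^{u}$ has an edge to both states of $L_i^{u+1}$ for $0\le u<j_i$; every state of $L_i^{j_i}$ has an edge to both states of $L_{i-1}^0$ if $i\ge2$, and to $s_0$ if $i=1$; $s_0\to s_0$. The initial state is $w_{x_n}$. Formulas: $\ell_{=2}=\langle B\rangle\top\wedge[B][B]\bot$; $\psi_0=\bot$ and for $k\ge1$, $\psi_k=\langle A\rangle\varphi_k$ with $\varphi_k=(s\wedge\neg t)\wedge\bigwedge_{i=1}^n\big((x_i\wedge\neg r_i)\to F_i(x_1,\dots,x_{i-1},Z_i)\big)\wedge[B]\Big(\big(\bigvee_{i=1}^n\langle A\rangle p_{\overline{x_i}}\big)\to\langle A\rangle\big(\neg s\wedge\ell_{=2}\wedge\langle A\rangle(\ell_{=2}\wedge\neg\psi_{k-1})\big)\Big)$. *)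

From Stdlib Require Import List Arith Lia.
Import ListNotations.

(* Propositional variables: PX m is x_m, PZ i u is z_i^u. *)
Inductive pvar : Type := PX (m : nat) | PZ (i u : nat).

Inductive pform : Type :=
  | PVar (p : pvar)
  | PTop
  | PBot
  | PNot (a : pform)
  | PAnd (a b : pform)
  | POr (a b : pform).

Fixpoint peval (sigma : pvar -> bool) (f : pform) : bool :=
  match f with
  | PVar p => sigma p
  | PTop => true
  | PBot => false
  | PNot a => negb (peval sigma a)
  | PAnd a b => peval sigma a && peval sigma b
  | POr a b => peval sigma a || peval sigma b
  end.

Fixpoint pvars_ok (P : pvar -> Prop) (f : pform) : Prop :=
  match f with
  | PVar p => P p
  | PTop | PBot => True
  | PNot a => pvars_ok P a
  | PAnd a b | POr a b => pvars_ok P a /\ pvars_ok P b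
  end.

(* An SNSAT instance: n variables x_1..x_n, for each i a number j_i of
   private variables z_i^1..z_i^{j_i}, and formulas F_1..F_n. *)
Record snsat : Type := {
  sn_n : nat;
  sn_j : nat -> nat;
  sn_F : nat -> pform
}.

Definition snsat_wf (I : snsat) : Prop :=
  forall i, 1 <= i <= sn_n I ->
    pvars_ok (fun p => match p with
                       | PX m => 1 <= m < i
                       | PZ i' u => i' = i /\ 1 <= u <= sn_j I i
                       end) (sn_F I i).

Definition sat_given (I : snsat) (i : nat) (v : nat -> Prop) : Prop :=
  exists sigma : pvar -> bool,
    (forall m, 1 <= m < i -> (sigma (PX m) = true <-> v m)) /\
    peval sigma (sn_F I i) = true.

(* vpre I k m = v_I(x_m) for m <= k (built by recursion on k). *)
Fixpoint vpre (I : snsat) (k : nat) : nat -> Prop :=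
  match k with
  | 0 => fun _ => False
  | S k' => fun m => if m <=? k' then vpre I k' m else sat_given I (S k') (vpre I k')
  end.

Definition vI (I : snsat) (r : nat) : Prop := vpre I r r.

(* LX m = x_m, LZ i u = z_i^u, Ls = s, Lt = t, LR i = r_i, LPx i = p_{bar x_i} *)
Inductive letter : Type :=
  | LX (m : nat) | LZ (i u : nat) | Ls | Lt | LR (i : nat) | LPx (i : nat).

Inductive hs : Type :=
  | HP (p : letter)
  | HNeg (a : hs)
  | HAnd (a b : hs)
  | HTop
  | HBot
  | HA (a : hs)
  | HB (a : hs).

Definition HOr (a b : hs) : hs := HNeg (HAnd (HNeg a) (HNeg b)).
Definition HImp (a b : hs) : hs := HNeg (HAnd a (HNeg b)).
Definition HBox_B (a : hs) : hs := HNeg (HB (HNeg a)).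

Record kripke : Type := {
  kst : Type;
  kW : kst -> Prop;
  kdelta : kst -> kst -> Prop;
  kmu : kst -> letter -> Prop;
  kw0 : kst
}.

Fixpoint chain {S : Type} (d : S -> S -> Prop) (rho : list S) : Prop :=
  match rho with
  | [] => True
  | w :: rest =>
      match rest with
      | [] => True
      | w' :: _ => d w w' /\ chain d rest
      end
  end.

Definition track (K : kripke) (rho : list (kst K)) : Prop :=
  rho <> [] /\ Forall (kW K) rho /\ chain (kdelta K) rho.

Definition lst {S : Type} (rho : list S) : option S := hd_error (rev rho).

Fixpoint hs_sat (K : kripke) (rho : list (kst K)) (phi : hs) : Prop :=
  match phi with
  | HP p => forall w, In w rho -> kmu K w p
  | HNeg a => ~ hs_sat K rho a
  | HAnd a b => hs_sat K rho a /\ hs_sat K rho b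
  | HTop => True
  | HBot => False
  | HA a => exists rho', track K rho' /\ hd_error rho' = lst rho /\ hs_sat K rho' a
  | HB a => exists i, 1 <= i < length rho /\ hs_sat K (firstn i rho) a
  end.

(* S0 = s_0, WX i = w_{x_i}, WXb i = bar w_{x_i}, Sb i = bar s_i,
   WZ i u = w_{z_i^u}, WZb i u = bar w_{z_i^u} *)
Inductive kstate : Type :=
  | S0 | WX (i : nat) | WXb (i : nat) | Sb (i : nat) | WZ (i u : nat) | WZb (i u : nat).

Section KI.
Variable I : snsat.

Definition inXr (m : nat) : Prop := 1 <= m <= sn_n I.
Definition inZr (i u : nat) : Prop := 1 <= i <= sn_n I /\ 1 <= u <= sn_j I i.

Definition KW (w : kstate) : Prop :=
  match w with
  | S0 => True
  | WX i | WXb i | Sb i => inXr i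
  | WZ i u | WZb i u => inZr i u
  end.

(* layers L_i^0 = {w_{x_i}, bar w_{x_i}}, L_i^u = {w_{z_i^u}, bar w_{z_i^u}} *)
Definition inL (i u : nat) (w : kstate) : Prop :=
  if u =? 0 then w = WX i \/ w = WXb i else w = WZ i u \/ w = WZb i u.

Definition Kdelta (w w' : kstate) : Prop :=
  (exists i, inXr i /\ w = WXb i /\ w' = Sb i) \/
  (exists i, inXr i /\ w = Sb i /\ w' = WX i) \/
  (exists i u, inXr i /\ u < sn_j I i /\ inL i u w /\ inL i (S u) w') \/
  (exists i, 2 <= i <= sn_n I /\ inL i (sn_j I i) w /\ inL (i - 1) 0 w') \/
  (1 <= sn_n I /\ inL 1 (sn_j I 1) w /\ w' = S0) \/
  (w = S0 /\ w' = S0).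

Definition Kmu (w : kstate) (p : letter) : Prop :=
  match w with
  | WX i | WZ i _ =>
      match p with
      | LX m => inXr m | LZ i' u' => inZr i' u' | Ls => True | Lt => True
      | LR m => inXr m /\ m <> i | LPx _ => False
      end
  | WXb i =>
      match p with
      | LX m => inXr m /\ m <> i | LZ i' u' => inZr i' u' | Ls => True | Lt => True
      | LR m => inXr m /\ m <> i | LPx m => m = i
      end
  | WZb i u =>
      match p with
      | LX m => inXr m | LZ i' u' => inZr i' u' /\ (i', u') <> (i, u)
      | Ls => True | Lt => True
      | LR m => inXr m /\ m <> i | LPx _ => False
      end
  | Sb i =>
      match p with
      | LX m => inXr m | LZ i' u' => inZr i' u' | Ls => False | Lt => True
      | LR m => inXr m /\ m <> i | LPx _ => False
      end
  | S0 =>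
      match p with
      | LX m => inXr m | LZ i' u' => inZr i' u' | Ls => True | Lt => False
      | LR m => inXr m | LPx _ => False
      end
  end.

Definition KI : kripke := {|
  kst := kstate;
  kW := KW;
  kdelta := Kdelta;
  kmu := Kmu;
  kw0 := WX (sn_n I)
|}.

Fixpoint ptr (f : pform) : hs :=
  match f with
  | PVar (PX m) => HP (LX m)
  | PVar (PZ i u) => HP (LZ i u)
  | PTop => HTop
  | PBot => HBot
  | PNot a => HNeg (ptr a)
  | PAnd a b => HAnd (ptr a) (ptr b)
  | POr a b => HOr (ptr a) (ptr b)
  end.

Fixpoint bigand (f : nat -> hs) (n : nat) : hs :=
  match n with 0 => HTop | S n' => HAnd (bigand f n') (f (S n')) end.
Fixpoint bigor (f : nat -> hs) (n : nat) : hs :=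
  match n with 0 => HBot | S n' => HOr (bigor f n') (f (S n')) end.

Definition ell2 : hs := HAnd (HB HTop) (HBox_B (HBox_B HBot)).

Definition phi_body (prev : hs) : hs :=
  HAnd (HAnd (HAnd (HP Ls) (HNeg (HP Lt)))
             (bigand (fun i => HImp (HAnd (HP (LX i)) (HNeg (HP (LR i)))) (ptr (sn_F I i)))
                     (sn_n I)))
       (HBox_B (HImp (bigor (fun i => HA (HP (LPx i))) (sn_n I))
                     (HA (HAnd (HAnd (HNeg (HP Ls)) ell2)
                               (HA (HAnd ell2 (HNeg prev))))))).

Fixpoint psi (k : nat) : hs :=
  match k with
  | 0 => HBot
  | S k' => HA (phi_body (psi k'))
  end.

End KI.

From Stdlib Require Import List Arith Lia Bool Classical ClassicalEpsilon.
Import ListNotations.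

(* Each transition lowers the level (the index i of the states of layer i) by at most one,
   and s /\ ~t forces a track witnessing psi_(k+1) at w_(x_r) or its bar twin to reach the
   absorbing state s_0.  Such a track therefore crosses every level i <= r, where r_i fails,
   and it reads off a valuation of X and Z: x_i is true iff bar w_(x_i) is avoided.  The
   conjuncts of phi_(k+1) then force F_i whenever x_i is read as true, while the [B]-clause
   forces w_(x_i) |/= psi_k whenever bar w_(x_i) is visited, since the only s-free
   continuation of bar w_(x_i) is bar s_i -> w_(x_i).  By induction on k, psi_k already
   decides x_i correctly for i <= k, so along the track the valuation agrees with v_I below
   r.  Conversely, the track choosing states according to v_I and to satisfying assignments
   of the true F_i witnesses psi_(k+1). *)

Definition asbool (P : Prop) : bool :=
  if excluded_middle_informative P then true else false.

Lemma asbool_true (P : Prop) : asbool P = true <-> P.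
Proof. unfold asbool. destruct (excluded_middle_informative P); split; auto; discriminate. Qed.

Lemma sat_HImp K rho a b :
  hs_sat K rho (HImp a b) <-> (hs_sat K rho a -> hs_sat K rho b).
Proof.
  simpl. split; [|tauto].
  intros H Ha. apply NNPP. intros Hb. apply H. auto.
Qed.

Lemma sat_HBox_B K rho a :
  hs_sat K rho (HBox_B a) <-> (forall i, 1 <= i < length rho -> hs_sat K (firstn i rho) a).
Proof.
  simpl. split.
  - intros H i Hi. apply NNPP. intros Hn. apply H. eauto.
  - intros H [i [Hi Hn]]. apply Hn, H, Hi.
Qed.

Lemma sat_bigand K rho f n :
  hs_sat K rho (bigand f n) <-> (forall i, 1 <= i <= n -> hs_sat K rho (f i)).
Proof.
  induction n as [|n IHn]; simpl.
  - split; [intros _ i Hi; lia | trivial].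
  - rewrite IHn. split.
    + intros [Hlt Hn] i Hi. destruct (Nat.eq_dec i (S n)) as [->|Hne]; auto. apply Hlt. lia.
    + intros H. split; [intros i Hi|]; apply H; lia.
Qed.

Lemma sat_bigor K rho f n :
  hs_sat K rho (bigor f n) <-> (exists i, 1 <= i <= n /\ hs_sat K rho (f i)).
Proof.
  induction n as [|n IHn]; simpl.
  - split; [tauto | intros [i [Hi _]]; lia].
  - rewrite IHn. split.
    + intros H. apply NNPP. intros Hn. apply H. split.
      * intros [i [Hi Hs]]. apply Hn. exists i. split; [lia | exact Hs].
      * intros Hs. apply Hn. exists (S n). split; [lia | exact Hs].
    + intros [i [Hi Hs]] [Hlt Hn]. destruct (Nat.eq_dec i (S n)) as [->|Hne]; auto.
      apply Hlt. exists i. split; [lia | exact Hs].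
Qed.

Lemma sat_ell2 K rho : hs_sat K rho ell2 <-> length rho = 2.
Proof.
  unfold ell2, HBox_B. simpl. split.
  - intros [[i [Hi _]] Hbox]. destruct (Nat.eq_dec (length rho) 2) as [E|Hne]; [exact E|].
    exfalso. apply Hbox. exists 2. split; [lia|]. intros Hn. apply Hn.
    exists 1. rewrite length_firstn. split; [lia | tauto].
  - intros E. split; [exists 1; split; [lia | trivial]|].
    intros [i [Hi Hn]]. apply Hn. intros [j [Hj _]]. rewrite length_firstn in Hj. lia.
Qed.

Lemma lst_snoc {S} (l : list S) w : lst (l ++ [w]) = Some w.
Proof. unfold lst. rewrite rev_unit. reflexivity. Qed.

Lemma lst_cons {S} (a : S) l : l <> [] -> lst (a :: l) = lst l.
Proof.
  intros Hl. unfold lst. simpl. destruct (rev l) as [|b l'] eqn:E; [|reflexivity].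
  exfalso. apply Hl. rewrite <- (rev_involutive l), E. reflexivity.
Qed.

Lemma lst_In {S} (l : list S) w : lst l = Some w -> In w l.
Proof.
  unfold lst. intros H. apply in_rev. destruct (rev l); simpl in H; [discriminate|].
  injection H as ->. left. reflexivity.
Qed.

Lemma hd_error_Some_cons {S} (l : list S) a : hd_error l = Some a -> exists rest, l = a :: rest.
Proof. destruct l; simpl; intros H; [discriminate|]. injection H as ->. eauto. Qed.

Lemma track_pair K rho a :
  track K rho -> hd_error rho = Some a -> length rho = 2 ->
  exists b, rho = [a; b] /\ kdelta K a b.
Proof.
  intros [_ [_ Hc]] Hhd Hlen.
  destruct rho as [|a' [|b [|]]]; simpl in *; try discriminate.
  injection Hhd as ->. exists b. split; [reflexivity | apply Hc].
Qed.

Lemma chain_invariant {S} (d : S -> S -> Prop) (Q : S -> Prop) :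
  (forall w w', Q w -> d w w' -> Q w') ->
  forall l a, chain d (a :: l) -> Q a -> forall w, In w (a :: l) -> Q w.
Proof.
  intros HQ. induction l as [|b l IHl]; intros a Hc Ha w Hw.
  - destruct Hw as [<-|[]]. exact Ha.
  - destruct Hc as [Hab Hc]. destruct Hw as [<-|Hw]; [exact Ha|].
    apply (IHl b); eauto.
Qed.

Lemma chain_intermediate_value {S} (d : S -> S -> Prop) (f : S -> nat) :
  (forall w w', d w w' -> f w <= f w' + 1) ->
  forall i l a, chain d (a :: l) -> i <= f a -> (exists w, In w (a :: l) /\ f w < i) ->
  exists w, In w (a :: l) /\ f w = i.
Proof.
  intros Hstep i. induction l as [|b l IHl]; intros a Hc Ha [w [Hw Hwi]].
  - destruct Hw as [<-|[]]. lia.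
  - destruct (Nat.eq_dec (f a) i) as [E|Hne]; [exists a; simpl; auto|].
    destruct Hc as [Hab Hc]. pose proof (Hstep _ _ Hab).
    destruct Hw as [<-|Hw]; [lia|].
    destruct (IHl b Hc) as [w' [Hw' E]]; [lia | eauto | exists w'; simpl; auto].
Qed.

Lemma chain_absorbing_lst {S} (d : S -> S -> Prop) (z : S) :
  (forall w, d z w -> w = z) -> forall l, chain d l -> In z l -> lst l = Some z.
Proof.
  intros Hz. induction l as [|a [|b l] IHl]; intros Hc Hin.
  - destruct Hin.
  - destruct Hin as [<-|[]]. reflexivity.
  - destruct Hc as [Hab Hc]. rewrite lst_cons by discriminate. apply IHl; [exact Hc|].
    destruct Hin as [<-|Hin]; [left; apply Hz, Hab | exact Hin].
Qed.

Lemma peval_ext (P : pvar -> Prop) s1 s2 f :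
  pvars_ok P f -> (forall p, P p -> s1 p = s2 p) -> peval s1 f = peval s2 f.
Proof.
  intros Hok Hs. induction f as [p| | |a IH|a IHa b IHb|a IHa b IHb]; simpl in *; auto.
  - rewrite IH; auto.
  - destruct Hok. rewrite IHa, IHb; auto.
  - destruct Hok. rewrite IHa, IHb; auto.
Qed.

Lemma sat_given_ext I i (v v' : nat -> Prop) :
  (forall m, 1 <= m < i -> (v m <-> v' m)) -> sat_given I i v -> sat_given I i v'.
Proof.
  intros Hv [s [Hs HF]]. exists s. split; [|exact HF].
  intros m Hm. rewrite Hs by exact Hm. apply Hv, Hm.
Qed.

Lemma vpre_vI I k m : 1 <= m <= k -> (vpre I k m <-> vI I m).
Proof.
  induction k as [|k IHk]; intros Hm; [lia|].
  destruct (Nat.eq_dec m (S k)) as [->|Hne]; [reflexivity|].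
  cbn [vpre]. rewrite (proj2 (Nat.leb_le m k)) by lia. apply IHk. lia.
Qed.

Lemma vI_sat_given I i : 1 <= i -> (vI I i <-> sat_given I i (vI I)).
Proof.
  intros Hi. destruct i as [|i]; [lia|]. unfold vI. cbn [vpre].
  rewrite (proj2 (Nat.leb_gt (S i) i)) by lia.
  split; apply sat_given_ext; intros m Hm; [|symmetry]; apply vpre_vI; lia.
Qed.

Definition level (w : kstate) : nat :=
  match w with S0 => 0 | WX i | WXb i | Sb i | WZ i _ | WZb i _ => i end.

(* An invariant of tracks from [WX r]: they never enter [WXb r] or [Sb r]. *)
Definition below_WX (r : nat) (w : kstate) : Prop :=
  match w with
  | WX i | WZ i _ | WZb i _ => i <= r
  | WXb i | Sb i => i < r
  | S0 => True
  end.

Ltac case_Kdelta :=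
  repeat match goal with
  | H : Kdelta _ _ _ |- _ => unfold Kdelta in H
  | H : inL _ _ _ |- _ => unfold inL in H; simpl in H
  | H : context [?u =? 0] |- _ => destruct (u =? 0)
  | H : _ \/ _ |- _ => destruct H
  | H : _ /\ _ |- _ => destruct H
  | H : exists _, _ |- _ => destruct H
  end; subst.

Section KripkeFacts.
Variable I : snsat.

Lemma Kdelta_level w w' : Kdelta I w w' -> level w <= level w' + 1.
Proof. intros H. case_Kdelta; simpl; lia. Qed.

Lemma Kdelta_S0 w : Kdelta I S0 w -> w = S0.
Proof. intros H. case_Kdelta; try discriminate; reflexivity. Qed.

Lemma Kdelta_below_WX r w w' : below_WX r w -> Kdelta I w w' -> below_WX r w'.
Proof. intros Hw H. case_Kdelta; try discriminate; simpl in *; lia. Qed.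

Lemma Kdelta_WXb i w : Kdelta I (WXb i) w -> ~ Kmu I w Ls -> w = Sb i.
Proof.
  intros H Hs. case_Kdelta; try discriminate; simpl in Hs; try tauto.
  injection H0 as ->. reflexivity.
Qed.

Lemma Kdelta_Sb i w : Kdelta I (Sb i) w -> w = WX i.
Proof. intros H. case_Kdelta; try discriminate. injection H0 as ->. reflexivity. Qed.

Lemma KW_level w : KW I w -> level w <= sn_n I.
Proof. destruct w; simpl; unfold inXr, inZr; lia. Qed.

Lemma Kmu_Ls_Lt w : Kmu I w Ls -> ~ Kmu I w Lt -> w = S0.
Proof. destruct w; simpl; tauto. Qed.

Lemma Kmu_LR_level w : 1 <= level w -> ~ Kmu I w (LR (level w)).
Proof. destruct w; simpl; intros; try lia; tauto. Qed.

Lemma Kmu_LR w m : KW I w -> inXr I m -> level w <> m -> Kmu I w (LR m).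
Proof. destruct w; simpl; auto. Qed.

Lemma Kmu_LX w m : KW I w -> inXr I m -> (Kmu I w (LX m) <-> w <> WXb m).
Proof.
  destruct w; simpl; intros Hw Hm; split; intros H; try congruence; try tauto.
  - intros E. injection E as ->. tauto.
  - split; [exact Hm|]. intros ->. auto.
Qed.

Lemma Kmu_LZ w i u : KW I w -> inZr I i u -> (Kmu I w (LZ i u) <-> w <> WZb i u).
Proof.
  destruct w; simpl; intros Hw Hz; split; intros H; try congruence; try tauto.
  - intros E. injection E as -> ->. tauto.
  - split; [exact Hz|]. intros E. injection E as -> ->. auto.
Qed.

Lemma Kmu_LPx w i : Kmu I w (LPx i) <-> w = WXb i.
Proof. destruct w; simpl; split; intros H; try tauto; try discriminate; congruence. Qed.

End KripkeFacts.

Section TrackLabels.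
Variable I : snsat.

Definition lsat (rho : list kstate) (p : letter) : Prop :=
  forall w, In w rho -> Kmu I w p.

Definition letter_of (p : pvar) : letter :=
  match p with PX m => LX m | PZ i u => LZ i u end.

Definition track_val (rho : list kstate) (p : pvar) : bool :=
  asbool (lsat rho (letter_of p)).

Lemma sat_ptr rho f : hs_sat (KI I) rho (ptr f) <-> peval (track_val rho) f = true.
Proof.
  unfold track_val.
  induction f as [[m|i u]| | |a IH|a IHa b IHb|a IHa b IHb]; simpl.
  - rewrite asbool_true. reflexivity.
  - rewrite asbool_true. reflexivity.
  - tauto.
  - split; [tauto | discriminate].
  - rewrite IH. destruct (peval _ a); simpl; intuition congruence.
  - rewrite IHa, IHb. destruct (peval _ a), (peval _ b); simpl; intuition congruence.
  - rewrite IHa, IHb. destruct (peval _ a), (peval _ b); simpl; intuition congruence.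
Qed.

Lemma lsat_LX rho m : (forall w, In w rho -> KW I w) -> inXr I m ->
  (lsat rho (LX m) <-> ~ In (WXb m) rho).
Proof.
  intros HW Hm. split.
  - intros H Hin. exact (proj1 (Kmu_LX I _ m (HW _ Hin) Hm) (H _ Hin) eq_refl).
  - intros H w Hw. apply Kmu_LX; auto. intros ->. auto.
Qed.

Lemma lsat_LZ rho i u : (forall w, In w rho -> KW I w) -> inZr I i u ->
  (lsat rho (LZ i u) <-> ~ In (WZb i u) rho).
Proof.
  intros HW Hz. split.
  - intros H Hin. exact (proj1 (Kmu_LZ I _ i u (HW _ Hin) Hz) (H _ Hin) eq_refl).
  - intros H w Hw. apply Kmu_LZ; auto. intros ->. auto.
Qed.

Lemma track_KW rho w : track (KI I) rho -> In w rho -> KW I w.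
Proof. intros [_ [HW _]] Hw. rewrite Forall_forall in HW. exact (HW w Hw). Qed.

Lemma psi_lst k rho1 rho2 : lst rho1 = lst rho2 ->
  (hs_sat (KI I) rho1 (psi I k) <-> hs_sat (KI I) rho2 (psi I k)).
Proof. intros H. destruct k; cbn [psi hs_sat]; [tauto | rewrite H; tauto]. Qed.

Lemma sat_A_LPx rho i : inXr I i ->
  (hs_sat (KI I) rho (HA (HP (LPx i))) <-> lst rho = Some (WXb i)).
Proof.
  intros Hi. split.
  - intros [[|a rest] [[Hne _] [Hhd Hall]]]; [congruence|].
    rewrite <- Hhd. simpl. f_equal. apply (Kmu_LPx I), Hall. left. reflexivity.
  - intros Hlst. exists [WXb i]. split; [|split].
    + split; [discriminate | split; [constructor; [exact Hi | constructor] | simpl; trivial]].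
    + rewrite Hlst. reflexivity.
    + intros w [<-|[]]. simpl. reflexivity.
Qed.

Lemma sat_detour rho k i : inXr I i -> lst rho = Some (WXb i) ->
  (hs_sat (KI I) rho (HA (HAnd (HAnd (HNeg (HP Ls)) ell2) (HA (HAnd ell2 (HNeg (psi I k))))))
   <-> ~ hs_sat (KI I) [WX i] (psi I k)).
Proof.
  intros Hi Hlst. split.
  - intros [rho2 [Htr2 [Hhd2 [[Hns Hl2] [rho3 [Htr3 [Hhd3 [Hl3 Hnp]]]]]]]].
    change (kst (KI I)) with kstate in *. rewrite Hlst in Hhd2. apply sat_ell2 in Hl2, Hl3.
    destruct (track_pair _ _ _ Htr2 Hhd2 Hl2) as [b [-> Hb]].
    assert (Eb : b = Sb i).
    { apply (Kdelta_WXb I i b Hb). intros Hs. apply Hns.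
      intros w [<-|[<-|[]]]; simpl; auto. }
    subst b. simpl in Hhd3.
    destruct (track_pair _ _ _ Htr3 Hhd3 Hl3) as [c [-> Hc]].
    apply (Kdelta_Sb I) in Hc. subst c.
    intros Hp. apply Hnp. revert Hp. apply psi_lst. reflexivity.
  - intros Hnp. exists [WXb i; Sb i]. split; [|split; [symmetry; exact Hlst|split]].
    + split; [discriminate | split; [constructor; [|constructor; [|constructor]]; exact Hi|]].
      split; [left; exists i; auto | simpl; trivial].
    + split; [|apply sat_ell2; reflexivity].
      intros Hs. apply (Hs (Sb i)). simpl. auto.
    + exists [Sb i; WX i]. split; [|split; [reflexivity | split; [apply sat_ell2; reflexivity|]]].
      * split; [discriminate | split; [constructor; [|constructor; [|constructor]]; exact Hi|]].
        split; [right; left; exists i; auto | simpl; trivial].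
      * intros Hp. apply Hnp. revert Hp. apply psi_lst. reflexivity.
Qed.

Lemma sat_phi_body rho k : hs_sat (KI I) rho (phi_body I (psi I k)) <->
  (lsat rho Ls /\ ~ lsat rho Lt) /\
  (forall i, 1 <= i <= sn_n I -> lsat rho (LX i) -> ~ lsat rho (LR i) ->
     peval (track_val rho) (sn_F I i) = true) /\
  (forall p i, 1 <= p < length rho -> 1 <= i <= sn_n I -> lst (firstn p rho) = Some (WXb i) ->
     ~ hs_sat (KI I) [WX i] (psi I k)).
Proof.
  unfold phi_body. cbn [hs_sat]. rewrite sat_bigand, sat_HBox_B.
  setoid_rewrite sat_HImp. setoid_rewrite sat_bigor. setoid_rewrite sat_ptr.
  split.
  - intros [[Hst Hand] Hbox]. split; [exact Hst | split].
    + intros i Hi HX HR. apply Hand; [exact Hi | split; assumption].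
    + intros p i Hp Hi Hlst. apply (sat_detour _ k i Hi Hlst), Hbox; [exact Hp|].
      exists i. split; [exact Hi | apply sat_A_LPx; assumption].
  - intros [Hst [Hand Hbox]]. split; [split; [exact Hst|] | ].
    + intros i Hi [HX HR]. apply Hand; assumption.
    + intros p Hp [i [Hi HA]]. apply sat_A_LPx in HA; [|exact Hi].
      apply (sat_detour _ k i Hi HA). eapply Hbox; eassumption.
Qed.

End TrackLabels.

Lemma track_from_WX_avoids_WXb I r rho :
  track (KI I) rho -> hd_error rho = Some (WX r) -> ~ In (WXb r) rho.
Proof.
  intros [_ [_ Hc]] Hhd Hin. destruct (hd_error_Some_cons _ _ Hhd) as [rest ->].
  assert (Hbelow : below_WX r (WXb r)).
  { apply (chain_invariant (Kdelta I) (below_WX r) (Kdelta_below_WX I r) rest (WX r));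
      [exact Hc | simpl; lia | exact Hin]. }
  simpl in Hbelow. lia.
Qed.

Section PhiTrack.
Variables (I : snsat) (k : nat) (w0 : kstate) (rho : list kstate).
Hypotheses (Htrack : track (KI I) rho) (Hhd : hd_error rho = Some w0)
  (Hphi : hs_sat (KI I) rho (phi_body I (psi I k))).

Lemma phi_track_lst : lst rho = Some S0.
Proof.
  destruct (proj1 (sat_phi_body I rho k) Hphi) as [[Hs Ht] _].
  pose proof Htrack as [_ [_ Hc]].
  apply (chain_absorbing_lst (Kdelta I) S0 (Kdelta_S0 I) rho Hc).
  apply NNPP. intros Hno. apply Ht. intros w Hw. apply NNPP. intros Hnt.
  apply Hno. rewrite <- (Kmu_Ls_Lt I w (Hs w Hw) Hnt). exact Hw.
Qed.

Lemma phi_track_refutes i : In (WXb i) rho -> ~ hs_sat (KI I) [WX i] (psi I k).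
Proof.
  intros Hin. destruct (proj1 (sat_phi_body I rho k) Hphi) as [_ [_ Hbox]].
  destruct (in_split _ _ Hin) as [l1 [l2 Hsplit]].
  assert (Hl2 : l2 <> []).
  { intros ->. pose proof phi_track_lst as Hlst.
    rewrite Hsplit, lst_snoc in Hlst. discriminate. }
  apply (Hbox (length l1 + 1)).
  - rewrite Hsplit, length_app. destruct l2; [congruence | simpl; lia].
  - exact (track_KW I rho (WXb i) Htrack Hin).
  - rewrite Hsplit, firstn_app, Nat.add_sub_swap, Nat.sub_diag by lia.
    rewrite firstn_all2 by lia. apply lst_snoc.
Qed.

(* The track starts at level [level w0] and ends in [S0], so it crosses level [i]. *)
Lemma phi_track_LR i : 1 <= i <= level w0 -> ~ lsat I rho (LR i).
Proof.
  intros Hi Hall. pose proof Htrack as [_ [_ Hc]].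
  destruct (hd_error_Some_cons _ _ Hhd) as [rest Hsplit]. rewrite Hsplit in Hc, Hall.
  destruct (chain_intermediate_value (Kdelta I) level (Kdelta_level I) i rest w0 Hc)
    as [w [Hw Ew]]; [lia| |].
  - exists S0. split; [|simpl; lia]. rewrite <- Hsplit. apply lst_In, phi_track_lst.
  - apply (Kmu_LR_level I w); [lia|]. rewrite Ew. exact (Hall w Hw).
Qed.

Lemma phi_track_sat_given i : 1 <= i <= level w0 -> ~ In (WXb i) rho ->
  sat_given I i (fun m => ~ In (WXb m) rho).
Proof.
  intros Hi Hnin. destruct (proj1 (sat_phi_body I rho k) Hphi) as [_ [Hand _]].
  assert (Hn : level w0 <= sn_n I).
  { apply KW_level, (track_KW I rho). exact Htrack.
    destruct (hd_error_Some_cons _ _ Hhd) as [rest ->]. left. reflexivity. }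
  assert (HX : forall m, 1 <= m <= sn_n I -> (lsat I rho (LX m) <-> ~ In (WXb m) rho)).
  { intros m Hm. apply lsat_LX; [intros w; apply track_KW, Htrack | exact Hm]. }
  exists (track_val I rho). split.
  - intros m Hm. unfold track_val. rewrite asbool_true. apply HX. lia.
  - apply Hand; [lia | apply HX; [lia | exact Hnin] | apply phi_track_LR, Hi].
Qed.

Lemma vI_of_phi_track i : 1 <= i <= level w0 ->
  (forall m, 1 <= m < i -> (~ In (WXb m) rho <-> vI I m)) ->
  ~ In (WXb i) rho -> vI I i.
Proof.
  intros Hi Hagree Hnin. apply vI_sat_given; [lia|].
  exact (sat_given_ext I i _ _ Hagree (phi_track_sat_given i Hi Hnin)).
Qed.

End PhiTrack.

Section Witness.
Variables (I : snsat) (sigma : pvar -> bool).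

Definition xstate (i : nat) : kstate := if sigma (PX i) then WX i else WXb i.
Definition zstate (i u : nat) : kstate := if sigma (PZ i u) then WZ i u else WZb i u.

Fixpoint witness (r : nat) : list kstate :=
  match r with
  | 0 => [S0]
  | S r' => xstate (S r') :: map (zstate (S r')) (seq 1 (sn_j I (S r'))) ++ witness r'
  end.

Lemma in_witness r w : In w (witness r) <-> w = S0 \/ exists i, 1 <= i <= r /\
  (w = xstate i \/ exists u, 1 <= u <= sn_j I i /\ w = zstate i u).
Proof.
  induction r as [|r IHr]; simpl.
  - split; [intros [<-|[]]; auto | intros [<-|[i [Hi _]]]; [auto | lia]].
  - rewrite in_app_iff, in_map_iff, IHr. setoid_rewrite in_seq. split.
    + intros [<-|[[u [<- Hu]]|[->|[i [Hi H]]]]].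
      * right. exists (S r). split; [lia | left; reflexivity].
      * right. exists (S r). split; [lia | right; exists u; split; [lia | reflexivity]].
      * left. reflexivity.
      * right. exists i. split; [lia | exact H].
    + intros [->|[i [Hi H]]]; [right; right; left; reflexivity|].
      destruct (Nat.eq_dec i (S r)) as [->|Hne].
      * destruct H as [->|[u [Hu ->]]]; [left; reflexivity|].
        right. left. exists u. split; [reflexivity | lia].
      * right. right. right. exists i. split; [lia | exact H].
Qed.

Lemma witness_state r w : r <= sn_n I -> In w (witness r) ->
  KW I w /\ Kmu I w Ls /\ level w <= r.
Proof.
  intros Hr Hw. apply in_witness in Hw.
  destruct Hw as [->|[i [Hi [->|[u [Hu ->]]]]]]; simpl; [lia| |].
  - unfold xstate. destruct (sigma (PX i)); simpl; unfold inXr; repeat split; lia.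
  - unfold zstate. destruct (sigma (PZ i u)); simpl; unfold inZr; repeat split; lia.
Qed.

Lemma witness_notin_WXb r m : 1 <= m <= r ->
  (~ In (WXb m) (witness r) <-> sigma (PX m) = true).
Proof.
  intros Hm. rewrite in_witness. split.
  - intros Hn. destruct (sigma (PX m)) eqn:E; [reflexivity|]. exfalso. apply Hn.
    right. exists m. split; [lia | left]. unfold xstate. rewrite E. reflexivity.
  - intros E [H|[i [Hi [H|[u [Hu H]]]]]]; [discriminate | |].
    + unfold xstate in H. destruct (sigma (PX i)) eqn:Ei; [discriminate|].
      injection H as ->. congruence.
    + unfold zstate in H. destruct (sigma (PZ i u)); discriminate.
Qed.

Lemma witness_notin_WZb r i u : 1 <= i <= r -> 1 <= u <= sn_j I i ->
  (~ In (WZb i u) (witness r) <-> sigma (PZ i u) = true).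
Proof.
  intros Hi Hu. rewrite in_witness. split.
  - intros Hn. destruct (sigma (PZ i u)) eqn:E; [reflexivity|]. exfalso. apply Hn.
    right. exists i. split; [lia | right; exists u; split; [lia|]]. unfold zstate. rewrite E. reflexivity.
  - intros E [H|[i' [Hi' [H|[u' [Hu' H]]]]]]; [discriminate | |].
    + unfold xstate in H. destruct (sigma (PX i')); discriminate.
    + unfold zstate in H. destruct (sigma (PZ i' u')) eqn:Ei; [discriminate|].
      injection H as -> ->. congruence.
Qed.

Lemma chain_layer i rest : inXr I i ->
  (forall w, inL i (sn_j I i) w -> chain (Kdelta I) (w :: rest)) ->
  forall c u w, u + c = sn_j I i -> inL i u w ->
  chain (Kdelta I) (w :: map (zstate i) (seq (S u) c) ++ rest).
Proof.
  intros Hi Hrest. induction c as [|c IHc]; intros u w Hc Hw; cbn [map seq app].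
  - apply Hrest. replace (sn_j I i) with u by lia. exact Hw.
  - assert (Hz : inL i (S u) (zstate i (S u))).
    { unfold inL, zstate. simpl. destruct (sigma (PZ i (S u))); auto. }
    split; [|apply IHc; [lia | exact Hz]].
    right. right. left. exists i, u. split; [exact Hi | split; [lia | split; [exact Hw | exact Hz]]].
Qed.

Lemma witness_chain r : r <= sn_n I -> chain (Kdelta I) (witness r).
Proof.
  induction r as [|r IHr]; intros Hr; [simpl; trivial|].
  apply (chain_layer (S r) (witness r)); [unfold inXr; lia | | lia |].
  - intros w Hw. destruct r as [|r].
    + split; [|simpl; trivial]. right. right. right. right. left. auto with arith.
    + split; [|apply IHr; lia]. right. right. right. left. exists (S (S r)).
      split; [lia | split; [exact Hw|]]. rewrite Nat.sub_succ, Nat.sub_0_r.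
      unfold inL, xstate. simpl. destruct (sigma (PX (S r))); auto.
  - unfold inL, xstate. simpl. destruct (sigma (PX (S r))); auto.
Qed.

Lemma witness_track r : r <= sn_n I -> track (KI I) (witness r).
Proof.
  intros Hr. split; [destruct r; discriminate | split].
  - apply Forall_forall. intros w Hw. apply (witness_state r w Hr Hw).
  - apply witness_chain, Hr.
Qed.

Lemma witness_lsat_LX r m : r <= sn_n I -> 1 <= m <= r ->
  (lsat I (witness r) (LX m) <-> sigma (PX m) = true).
Proof.
  intros Hr Hm. rewrite <- (witness_notin_WXb r m Hm).
  apply lsat_LX; [intros w Hw; apply (witness_state r w Hr Hw) | unfold inXr; lia].
Qed.

Lemma witness_lsat_LZ r i u : r <= sn_n I -> 1 <= i <= r -> 1 <= u <= sn_j I i ->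
  (lsat I (witness r) (LZ i u) <-> sigma (PZ i u) = true).
Proof.
  intros Hr Hi Hu. rewrite <- (witness_notin_WZb r i u Hi Hu).
  apply lsat_LZ; [intros w Hw; apply (witness_state r w Hr Hw) | unfold inZr; lia].
Qed.

Hypothesis Hwf : snsat_wf I.

Lemma witness_track_val_F r i : r <= sn_n I -> 1 <= i <= r ->
  peval (track_val I (witness r)) (sn_F I i) = peval sigma (sn_F I i).
Proof.
  intros Hr Hi. apply (peval_ext _ _ _ _ (Hwf i ltac:(lia))).
  intros [m|i' u] Hp; simpl in Hp; apply eq_true_iff_eq; unfold track_val; rewrite asbool_true.
  - apply witness_lsat_LX; lia.
  - destruct Hp as [-> Hu]. apply witness_lsat_LZ; lia.
Qed.

Lemma witness_sat k r : 1 <= r <= sn_n I ->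
  (forall i, 1 <= i <= r -> sigma (PX i) = true -> peval sigma (sn_F I i) = true) ->
  (forall i, 1 <= i <= r -> sigma (PX i) = false -> ~ hs_sat (KI I) [WX i] (psi I k)) ->
  hs_sat (KI I) [xstate r] (psi I (S k)).
Proof.
  intros Hr HF Hneg. exists (witness r). split; [apply witness_track; lia|].
  split; [destruct r; [lia | reflexivity]|].
  apply sat_phi_body. split; [split|split].
  - intros w Hw. apply (witness_state r w); [lia | exact Hw].
  - intros Ht. apply (Ht S0). apply in_witness. left. reflexivity.
  - intros i Hi HX HR. destruct (le_lt_dec i r) as [Hir|Hri].
    + rewrite witness_track_val_F by lia. apply HF; [lia|].
      apply (witness_lsat_LX r); [lia | lia | exact HX].
    + exfalso. apply HR. intros w Hw. destruct (witness_state r w ltac:(lia) Hw) as [HW [_ Hl]].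
      apply Kmu_LR; [exact HW | unfold inXr; lia | lia].
  - intros p i Hp Hi Hlst.
    assert (Hin : In (WXb i) (witness r)).
    { rewrite <- (firstn_skipn p (witness r)). apply in_app_iff. left. apply lst_In, Hlst. }
    assert (Hir : i <= r) by exact (proj2 (proj2 (witness_state r _ ltac:(lia) Hin))).
    apply Hneg; [lia|]. destruct (sigma (PX i)) eqn:E; [|reflexivity].
    exfalso. apply (proj2 (witness_notin_WXb r i ltac:(lia)) E Hin).
Qed.

End Witness.

(* The sets Z_i are disjoint, so satisfying assignments of the true F_i glue together. *)
Lemma snsat_model I : snsat_wf I -> exists sigma : pvar -> bool,
  (forall m, sigma (PX m) = true <-> vI I m) /\
  (forall i, 1 <= i <= sn_n I -> vI I i -> peval sigma (sn_F I i) = true).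
Proof.
  intros Hwf.
  assert (Hex : forall i, exists s : pvar -> bool, 1 <= i -> vI I i ->
    (forall m, 1 <= m < i -> (s (PX m) = true <-> vI I m)) /\ peval s (sn_F I i) = true).
  { intros i. destruct (classic (1 <= i /\ vI I i)) as [[Hi Hv]|Hn].
    - apply vI_sat_given in Hv; [|exact Hi]. destruct Hv as [s Hs]. exists s. auto.
    - exists (fun _ => true). intros Hi Hv. exfalso. auto. }
  pose (s i := proj1_sig (constructive_indefinite_description _ (Hex i))).
  exists (fun p => match p with PX m => asbool (vI I m) | PZ i u => s i (PZ i u) end).
  split; [intros m; apply asbool_true|].
  intros i Hi Hv.
  destruct (proj2_sig (constructive_indefinite_description _ (Hex i)) ltac:(lia) Hv) as [HX HF].
  rewrite <- HF. apply (peval_ext _ _ _ _ (Hwf i Hi)).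
  intros [m|i' u] Hp; simpl in Hp.
  - apply eq_true_iff_eq. rewrite asbool_true. symmetry. apply HX. lia.
  - destruct Hp as [-> _]. reflexivity.
Qed.

Lemma vI_witness_sat I k r : snsat_wf I -> 1 <= r <= sn_n I ->
  (forall i, 1 <= i <= r -> ~ vI I i -> ~ hs_sat (KI I) [WX i] (psi I k)) ->
  (vI I r -> hs_sat (KI I) [WX r] (psi I (S k))) /\
  (~ vI I r -> hs_sat (KI I) [WXb r] (psi I (S k))).
Proof.
  intros Hwf Hr Hneg. destruct (snsat_model I Hwf) as [sigma [HX HF]].
  assert (Hsat : hs_sat (KI I) [xstate sigma r] (psi I (S k))).
  { apply witness_sat; [exact Hwf | exact Hr | |].
    - intros i Hi Hx. apply HF; [lia | apply HX, Hx].
    - intros i Hi Hx. apply Hneg; [exact Hi|]. rewrite <- HX, Hx. discriminate. }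
  unfold xstate in Hsat.
  split; intros Hv; destruct (sigma (PX r)) eqn:E; try exact Hsat; exfalso.
  - apply HX in Hv. congruence.
  - apply Hv, HX, E.
Qed.

Section Step.
Variables (I : snsat) (k : nat).
Hypothesis Hwf : snsat_wf I.
Hypothesis IH : forall i, 1 <= i <= sn_n I -> i <= k ->
  (vI I i <-> hs_sat (KI I) [WX i] (psi I k)).

Lemma phi_track_agrees w0 rho :
  track (KI I) rho -> hd_error rho = Some w0 -> hs_sat (KI I) rho (phi_body I (psi I k)) ->
  forall i, 1 <= i <= level w0 -> i <= k -> (~ In (WXb i) rho <-> vI I i).
Proof.
  intros Htr Hhd Hphi i. induction i as [i IHi] using lt_wf_ind. intros Hi Hik. split.
  - apply (vI_of_phi_track I k w0 rho Htr Hhd Hphi i Hi).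
    intros m Hm. apply IHi; lia.
  - intros Hv Hin. apply (phi_track_refutes I k rho Htr Hphi i Hin), IH; [|lia|exact Hv].
    split; [lia|]. apply (KW_level I (WXb i)), (track_KW I rho _ Htr Hin).
Qed.

Lemma psi_S_WX r : 1 <= r <= sn_n I -> r <= S k ->
  (vI I r <-> hs_sat (KI I) [WX r] (psi I (S k))).
Proof.
  intros Hr Hrk. split.
  - intros Hv. refine (proj1 (vI_witness_sat I k r Hwf Hr _) Hv). intros i Hi Hni.
    assert (i <> r) by (intros ->; contradiction).
    rewrite <- IH by lia. exact Hni.
  - intros [rho [Htr [Hhd Hphi]]]. simpl in Hhd.
    apply (vI_of_phi_track I k (WX r) rho Htr Hhd Hphi r); [simpl; lia | |].
    + intros m Hm. apply (phi_track_agrees (WX r) rho Htr Hhd Hphi); simpl; lia.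
    + apply (track_from_WX_avoids_WXb I r rho Htr Hhd).
Qed.

Lemma psi_S_WXb r : 1 <= r <= sn_n I -> r <= k ->
  (~ vI I r <-> hs_sat (KI I) [WXb r] (psi I (S k))).
Proof.
  intros Hr Hrk. split.
  - intros Hnv. refine (proj2 (vI_witness_sat I k r Hwf Hr _) Hnv). intros i Hi Hni.
    rewrite <- IH by lia. exact Hni.
  - intros [rho [Htr [Hhd Hphi]]] Hv. simpl in Hhd.
    apply (phi_track_refutes I k rho Htr Hphi r).
    + destruct (hd_error_Some_cons _ _ Hhd) as [rest ->]. left. reflexivity.
    + apply IH; assumption.
Qed.

End Step.

Theorem mainTheorem5 (I : snsat) (Hwf : snsat_wf I) (k r : nat)
  (Hk : k <= sn_n I + 1) (Hr : 1 <= r <= sn_n I) :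
  (r <= k -> (vI I r <-> hs_sat (KI I) [WX r] (psi I k))) /\
  (r + 1 <= k -> (~ vI I r <-> hs_sat (KI I) [WXb r] (psi I k))).
Proof.
  assert (Hpart1 : forall k i, 1 <= i <= sn_n I -> i <= k ->
    (vI I i <-> hs_sat (KI I) [WX i] (psi I k))).
  { intros k'. induction k' as [|k' IHk]; intros i Hi Hik; [lia|].
    apply (psi_S_WX I k' Hwf IHk i Hi Hik). }
  split; [apply Hpart1, Hr|].
  intros Hrk. destruct k as [|k]; [lia|].
  apply (psi_S_WXb I k Hwf (Hpart1 k) r Hr). lia.
Qed.
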